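(* Let $c,d>0$, $g(x)=xF(c,d;c+d;x)$ for $x\in(0,1)$, let $0<a<1<b$, and set $\varphi(y)=\max\{y^a,y^b\}$ and $\varphi^{-1}(y)=\min\{y^{1/a},y^{1/b}\}$ for $y>0$. Let $\beta\in(0,1)$ be the unique solution of $$g\!\left(\frac{\varphi^{-1}(x/(1-x))}{1+\varphi^{-1}(x/(1-x))}\right)=1.$$ Put $a_0=\frac{cd}{c+d}$, $h=\frac{a_0^2}{c+d+1}$, $c_0=1-\frac{1}{2\log 2}$, $c_1=\frac{1}{\log 2}-1$. Then (1) if $(a_0-1)/h\le c_0$, then $\beta>1/2$; (2) if $(a_0-1)/h\ge c_1$, then $\beta<1/2$.
   Context: $F(a,b;c;x)$ is the Gaussian hypergeometric function $\sum_{n\ge0}\frac{(a)_n(b)_n}{(c)_n}\frac{x^n}{n!}$ ($|x|<1$), with $(a)_n=a(a+1)\cdots(a+n-1)$, $(a)_0=1$. *)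

From Stdlib Require Import Reals Arith.
Open Scope R_scope.

Fixpoint poch (a : R) (n : nat) : R :=
  match n with
  | O => 1
  | S k => poch a k * (a + INR k)
  end.

Definition hyp_term (a b c x : R) (n : nat) : R :=
  poch a n * poch b n / poch c n * x ^ n / INR (fact n).

Definition phi (a b y : R) : R := Rmax (Rpower y a) (Rpower y b).
Definition phiinv (a b y : R) : R := Rmin (Rpower y (1 / a)) (Rpower y (1 / b)).

(* The function of x appearing in the defining equation of beta,
   with g(x) = x * F(c,d;c+d;x). *)
Definition beta_lhs (F : R -> R) (a b x : R) : R :=
  let t := phiinv a b (x / (1 - x)) in
  let u := t / (1 + t) in
  u * F u.

From Stdlib Require Import Reals Lra Lia Psatz.
From Coquelicot Require Import Coquelicot.
Open Scope R_scope.

(* Write P = cd and s = c + d, so that a0 = P/s, (a0 - 1)/h = (P - s) s (s+1) / P^2,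
   and the Taylor coefficients of F(x) = F(c,d;c+d;x) satisfy
   coef_{k+1} = coef_k (k + P/(s+k)) / (k+1).

   1. Since g(x) = x F(x) is nondecreasing on (0,1) and t/(1+t), with
      t = phi^{-1}(x/(1-x)), lies on the same side of 1/2 as x, the equation
      g(...) = 1 forces beta > 1/2 when g(1/2) < 1, i.e. F(1/2) < 2, and
      beta < 1/2 when F(1/2) > 2.
   2. F(1/2) - 2 = sum_k 2^-k (coef_{k+1} - coef_k), and coef_{k+1} - coef_k
      has the sign of P - s - k.
   3. Under (1), the excess m = P - s is at most c0 < 0.2843 (using P <= s^2/4),
      so all increments with k >= 1 are negative and the first five already
      have a negative sum: F(1/2) < 2.
   4. Under (2), m > 0; for m <= 1 the bound coef_k <= P/s gives a lower
      bound on each increment that sums in closed form through the series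
      sum 2^-k/k >= ln 2, and the case m > 1 reduces to m = 1 since F grows
      with P: F(1/2) > 2.
   The estimate ln 2 < 0.6934 and the bound ln 2 <= sum 2^-k/k come from the
   monotonicity of log_sum n x + x^(n+1)/((n+1)(1-x)) + ln(1-x) on [0,1/2]. *)

Lemma Rdiv_nonpos_pos (a b : R) : a <= 0 -> 0 < b -> a / b <= 0.
Proof. intros Ha Hb. unfold Rdiv. pose proof (Rinv_0_lt_compat b Hb). nra. Qed.

Lemma Rdiv_le_compat_r (a b c : R) : 0 < c -> a <= b -> a / c <= b / c.
Proof.
  intros Hc Hab. unfold Rdiv.
  apply Rmult_le_compat_r; [apply Rlt_le, Rinv_0_lt_compat|]; lra.
Qed.

Lemma Rle_div_of_mul (a b c : R) : 0 < c -> a * c <= b -> a <= b / c.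
Proof. intros Hc H. exact (proj1 (Rle_div_r a b c Hc) H). Qed.

Lemma Rdiv_le_one (a b : R) : 0 < b -> a <= b -> a / b <= 1.
Proof. intros Hb H. exact (proj1 (Rdiv_le_1 a b Hb) H). Qed.

(* The Taylor coefficients of F(c,d;c+d;x) depend on c and d only through
   P = cd and s = c+d: writing (c+k)(d+k) = k(s+k) + P gives
   coef_{k+1} = coef_k * (k + P/(s+k)) / (k+1). *)
Fixpoint coef (P s : R) (k : nat) : R :=
  match k with
  | O => 1
  | S j => coef P s j * (INR j + P / (s + INR j)) / (INR j + 1)
  end.

Lemma coef_succ (P s : R) (k : nat) :
  coef P s (S k) = coef P s k * (INR k + P / (s + INR k)) / (INR k + 1).
Proof. reflexivity. Qed.

Lemma poch_pos (a : R) (n : nat) : 0 < a -> 0 < poch a n.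
Proof.
  intro Ha; induction n as [|n IH]; simpl; [lra|].
  apply Rmult_lt_0_compat; [exact IH|]. pose proof (pos_INR n); lra.
Qed.

Lemma hyp_term_coef (c d x : R) (n : nat) : 0 < c -> 0 < d ->
  hyp_term c d (c + d) x n = coef (c * d) (c + d) n * x ^ n.
Proof.
  intros Hc Hd.
  assert (Hcoef : poch c n * poch d n / poch (c + d) n / INR (Factorial.fact n)
                  = coef (c * d) (c + d) n).
  { induction n as [|n IH]; [simpl; field|].
    rewrite coef_succ, <- IH. simpl poch. rewrite fact_simpl, mult_INR, S_INR.
    pose proof (poch_pos (c + d) n ltac:(lra)).
    pose proof (lt_0_INR _ (Factorial.lt_O_fact n)). pose proof (pos_INR n).
    field. repeat split; lra. }
  rewrite <- Hcoef. unfold hyp_term.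
  pose proof (poch_pos (c + d) n ltac:(lra)).
  pose proof (lt_0_INR _ (Factorial.lt_O_fact n)).
  field. split; lra.
Qed.

Section Coefficients.

Variables P s : R.
Hypothesis Hs : 0 < s.

Lemma coef_pos (k : nat) : 0 < P -> 0 < coef P s k.
Proof.
  intro HP; induction k as [|k IH]; simpl; [lra|].
  pose proof (pos_INR k).
  assert (0 < P / (s + INR k)) by (apply Rdiv_lt_0_compat; lra).
  apply Rdiv_lt_0_compat; [apply Rmult_lt_0_compat|]; lra.
Qed.

Lemma coef_one : coef P s 1 = P / s.
Proof. simpl. field. lra. Qed.

Lemma coef_increment (k : nat) :
  coef P s (S k) - coef P s k
  = coef P s k * (P - s - INR k) / ((s + INR k) * (INR k + 1)).
Proof. simpl coef. pose proof (pos_INR k). field. lra. Qed.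

Lemma coef_le_first (k : nat) : 0 < P -> P - s <= 1 -> (1 <= k)%nat ->
  coef P s k <= P / s.
Proof.
  intros HP Hm Hk. induction k as [|k IH]; [lia|].
  destruct k as [|k]; [rewrite coef_one; lra|].
  specialize (IH ltac:(lia)). rewrite coef_succ.
  pose proof (coef_pos (S k) HP).
  assert (HkR : 1 <= INR (S k)) by (apply (le_INR 1); lia).
  assert (Hq : 0 <= P / (s + INR (S k)) <= 1).
  { split; [apply Rdiv_le_0_compat; lra|].
    apply Rdiv_le_one; lra. }
  assert (Hratio : 0 <= (INR (S k) + P / (s + INR (S k))) / (INR (S k) + 1) <= 1).
  { split; [apply Rdiv_le_0_compat; lra|]. apply Rdiv_le_one; lra. }
  replace (coef P s (S k) * (INR (S k) + P / (s + INR (S k))) / (INR (S k) + 1))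
    with (coef P s (S k) * ((INR (S k) + P / (s + INR (S k))) / (INR (S k) + 1)))
    by (field; lra).
  nra.
Qed.

End Coefficients.

Lemma coef_mono_P (P1 P2 s : R) (k : nat) : 0 < s -> 0 < P1 -> P1 <= P2 ->
  coef P1 s k <= coef P2 s k.
Proof.
  intros Hs HP H. induction k as [|k IH]; [simpl; lra|].
  rewrite !coef_succ. pose proof (pos_INR k). pose proof (coef_pos P1 s Hs k HP).
  apply Rdiv_le_compat_r; [lra|]. apply Rmult_le_compat; [lra| |exact IH|].
  - assert (0 <= P1 / (s + INR k)) by (apply Rdiv_le_0_compat; lra). lra.
  - apply Rplus_le_compat_l, Rdiv_le_compat_r; lra.
Qed.

(* Since F(1/2) - 2 = 2 F(1/2) - 2 - F(1/2) = sum_k (1/2)^k (coef_{k+1} - coef_k),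
   the sign of F(1/2) - 2 is read off from these increments. *)
Definition half_sum (P s : R) (n : nat) : R :=
  sum_f_R0 (fun k => coef P s k * (1 / 2) ^ k) n.

Definition half_incr (P s : R) (k : nat) : R :=
  (1 / 2) ^ k * (coef P s (S k) - coef P s k).

Section HalfSeries.

Variables P s : R.
Hypothesis Hs : 0 < s.

Lemma half_sum_identity (n : nat) :
  2 * half_sum P s (S n) - 2 - half_sum P s n = sum_f_R0 (half_incr P s) n.
Proof.
  unfold half_sum. induction n as [|n IH].
  - unfold half_incr. simpl. field. lra.
  - rewrite (tech5 (half_incr P s)), <- IH. unfold half_incr.
    rewrite (tech5 _ (S n)), (tech5 _ n). simpl pow. field.
Qed.

Lemma half_incr_limit (Fh : R) : is_lim_seq (half_sum P s) Fh ->
  is_lim_seq (fun n => sum_f_R0 (half_incr P s) n) (Fh - 2).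
Proof.
  intro HF.
  apply is_lim_seq_ext with (fun n => 2 * half_sum P s (S n) - 2 - half_sum P s n).
  { exact half_sum_identity. }
  replace (Fh - 2) with (2 * Fh - 2 - Fh) by ring.
  apply is_lim_seq_minus'; [apply is_lim_seq_minus'|exact HF].
  - apply (is_lim_seq_scal_l (fun n => half_sum P s (S n)) 2 Fh).
    exact (proj1 (is_lim_seq_incr_1 (half_sum P s) Fh) HF).
  - apply is_lim_seq_const.
Qed.

Lemma half_incr_eq (k : nat) :
  half_incr P s k
  = (1 / 2) ^ k * (coef P s k / (s + INR k)) * ((P - s - INR k) / (INR k + 1)).
Proof.
  unfold half_incr. rewrite coef_increment by lra. pose proof (pos_INR k).
  field. lra.
Qed.

Lemma half_incr_nonpos (k : nat) : 0 < P -> P - s <= INR k -> half_incr P s k <= 0.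
Proof.
  intros HP Hk. rewrite half_incr_eq. pose proof (pos_INR k).
  pose proof (coef_pos P s Hs k HP).
  assert (0 <= (1 / 2) ^ k) by (apply pow_le; lra).
  assert (0 <= coef P s k / (s + INR k)) by (apply Rdiv_le_0_compat; lra).
  assert ((P - s - INR k) / (INR k + 1) <= 0) by (apply Rdiv_nonpos_pos; lra).
  assert (0 <= (1 / 2) ^ k * (coef P s k / (s + INR k))) by (apply Rmult_le_pos; lra).
  nra.
Qed.

Lemma half_sum_growing : 0 < P -> Un_growing (half_sum P s).
Proof.
  intros HP n. unfold half_sum. rewrite tech5.
  pose proof (coef_pos P s Hs (S n) HP).
  assert (0 < (1 / 2) ^ S n) by (apply pow_lt; lra).
  nra.
Qed.

End HalfSeries.

Lemma half_sum_mono_P (P1 P2 s : R) (n : nat) : 0 < s -> 0 < P1 -> P1 <= P2 ->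
  half_sum P1 s n <= half_sum P2 s n.
Proof.
  intros. unfold half_sum. apply sum_growing. intro k.
  apply Rmult_le_compat_r; [apply pow_le; lra|]. apply coef_mono_P; lra.
Qed.

Fixpoint log_sum (n : nat) (x : R) : R :=
  match n with O => 0 | S j => log_sum j x + x ^ S j / (INR j + 1) end.

Fixpoint geom_sum (n : nat) (x : R) : R :=
  match n with O => 0 | S j => geom_sum j x + x ^ j end.

Lemma geom_sum_closed (n : nat) (x : R) : geom_sum n x * (1 - x) = 1 - x ^ n.
Proof.
  induction n as [|n IH]; simpl; [ring|]. rewrite Rmult_plus_distr_r, IH. ring.
Qed.

Lemma log_sum_derive (n : nat) (x : R) : is_derive (log_sum n) x (geom_sum n x).
Proof.
  induction n as [|n IH]; simpl; [auto_derive; easy|].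
  apply (is_derive_plus (log_sum n) (fun x => x ^ S n / (INR n + 1))); [exact IH|].
  auto_derive; [easy|].
  change (match n with 0%nat => 1 | S _ => INR n + 1 end) with (INR (S n)).
  rewrite S_INR. pose proof (pos_INR n). field. lra.
Qed.

Definition log_remainder (n : nat) (x : R) : R :=
  log_sum n x + x ^ S n / ((INR n + 1) * (1 - x)) + ln (1 - x).

Lemma log_remainder_derive (n : nat) (x : R) : x < 1 ->
  is_derive (log_remainder n) x (x ^ S n / ((INR n + 1) * (1 - x) ^ 2)).
Proof.
  intro Hx. pose proof (log_sum_derive n x) as Hd. unfold log_remainder.
  auto_derive.
  - repeat split; try lra. exists (geom_sum n x); exact Hd.
  - pose proof (pos_INR n). apply Rmult_integral_contrapositive; split; lra.
  - replace (Derive (fun y => log_sum n y) x) with (geom_sum n x)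
      by (symmetry; exact (is_derive_unique _ _ _ Hd)).
    assert (Hg : geom_sum n x = (1 - x ^ n) / (1 - x)).
    { pose proof (geom_sum_closed n x). field_simplify_eq; lra. }
    rewrite Hg.
    change (match n with 0%nat => 1 | S _ => INR n + 1 end) with (INR (S n)).
    rewrite S_INR. pose proof (pos_INR n). simpl pow. field. lra.
Qed.

Lemma log_sum_zero (n : nat) : log_sum n 0 = 0.
Proof.
  induction n as [|n IH]; simpl; [reflexivity|]. rewrite IH.
  pose proof (pos_INR n). field. lra.
Qed.

(* The classical bound ln 2 <= sum_{k=1}^n 2^-k/k + 2^-n/(n+1), from the
   monotonicity of log_remainder n on [0, 1/2]. *)
Lemma ln2_le_log_sum (n : nat) : ln 2 <= log_sum n (1 / 2) + (1 / 2) ^ n / (INR n + 1).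
Proof.
  assert (Hcont : forall x, x < 1 -> continuity_pt (log_remainder n) x).
  { intros x Hx. apply continuity_pt_filterlim.
    apply (ex_derive_continuous (log_remainder n)).
    eexists; apply log_remainder_derive; exact Hx. }
  destruct (MVT_gen (log_remainder n) 0 (1 / 2)
              (fun x => x ^ S n / ((INR n + 1) * (1 - x) ^ 2))) as [c [Hc Hmvt]].
  - intros x Hx. rewrite Rmin_left, Rmax_right in Hx by lra.
    apply log_remainder_derive; lra.
  - intros x Hx. rewrite Rmin_left, Rmax_right in Hx by lra. apply Hcont; lra.
  - rewrite Rmin_left, Rmax_right in Hc by lra.
    assert (Hpos : 0 <= c ^ S n / ((INR n + 1) * (1 - c) ^ 2)).
    { pose proof (pos_INR n). apply Rdiv_le_0_compat; [apply pow_le; lra|].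
      apply Rmult_lt_0_compat; [lra|apply pow_lt; lra]. }
    unfold log_remainder in Hmvt.
    rewrite log_sum_zero, Rminus_0_r, ln_1 in Hmvt.
    replace (1 - 1 / 2) with (/ 2) in Hmvt by field.
    rewrite ln_Rinv in Hmvt by lra.
    replace ((1 / 2) ^ S n / ((INR n + 1) * / 2)) with ((1 / 2) ^ n / (INR n + 1)) in Hmvt
      by (simpl; field; pose proof (pos_INR n); lra).
    replace (0 ^ S n) with 0 in Hmvt by (simpl; ring).
    nra.
Qed.

Lemma ln2_lt : ln 2 < 6934 / 10000.
Proof.
  pose proof (ln2_le_log_sum 6) as H.
  assert (E : log_sum 6 (1 / 2) + (1 / 2) ^ 6 / (INR 6 + 1) = 9319 / 13440)
    by (simpl; field).
  lra.
Qed.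

Lemma log_sum_half_le (n : nat) : log_sum n (1 / 2) <= 1 - (1 / 2) ^ n.
Proof.
  induction n as [|n IH]; simpl; [lra|].
  pose proof (pos_INR n). pose proof (pow_le (1 / 2) n ltac:(lra)).
  assert (1 / 2 * (1 / 2) ^ n / (INR n + 1) <= 1 / 2 * (1 / 2) ^ n).
  { apply Rle_div_l; nra. }
  lra.
Qed.

Lemma log_series_half :
  exists L : R, is_lim_seq (fun n => log_sum n (1 / 2)) L /\ ln 2 <= L /\ 2 / 3 <= L <= 1.
Proof.
  assert (Hgrow : Un_growing (fun n => log_sum n (1 / 2))).
  { intro n. simpl. pose proof (pos_INR n). pose proof (pow_le (1 / 2) n ltac:(lra)).
    assert (0 <= 1 / 2 * (1 / 2) ^ n / (INR n + 1)) by (apply Rdiv_le_0_compat; lra).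
    lra. }
  assert (Hle1 : forall n, log_sum n (1 / 2) <= 1).
  { intro n. pose proof (log_sum_half_le n). pose proof (pow_le (1 / 2) n). lra. }
  destruct (growing_cv _ Hgrow) as [L HL].
  { exists 1. intros x [n ->]. apply Hle1. }
  pose proof (growing_ineq _ _ Hgrow HL) as Hsup.
  apply is_lim_seq_Reals in HL.
  exists L. split; [exact HL|]. split; [|split].
  - assert (Htail : is_lim_seq (fun n => L + (1 / 2) ^ n) (L + 0)).
    { apply is_lim_seq_plus'; [apply is_lim_seq_const|].
      apply is_lim_seq_geom. rewrite Rabs_pos_eq; lra. }
    rewrite Rplus_0_r in Htail.
    apply (is_lim_seq_le (fun _ => ln 2) (fun n => L + (1 / 2) ^ n) (ln 2) L);
      [|apply is_lim_seq_const|exact Htail].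
    intro n. pose proof (ln2_le_log_sum n). pose proof (Hsup n).
    pose proof (pos_INR n). pose proof (pow_le (1 / 2) n ltac:(lra)).
    assert ((1 / 2) ^ n / (INR n + 1) <= (1 / 2) ^ n) by (apply Rle_div_l; nra).
    lra.
  - pose proof (Hsup 3%nat) as H3. simpl in H3. lra.
  - exact (is_lim_seq_le _ (fun _ => 1) L 1 Hle1 HL (is_lim_seq_const _)).
Qed.

(* Part (1): under (P - s) s (s+1) <= c0 P^2 the value F(1/2) is below 2.
   If the excess m = P - s is positive it is small (m <= c0 < 0.2843) and
   s > 4; then all increments from k = 1 on are negative, and the first five
   already sum to a negative number. *)

Lemma small_excess (m s c : R) : 0 < m -> 0 < s -> s + m <= s ^ 2 / 4 ->
  m * s * (s + 1) <= c * (s + m) ^ 2 -> 0 < c < 1 / 3 -> m <= c.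
Proof.
  intros Hm Hs Hp H Hc. apply Rnot_lt_le; intro Hlt.
  assert (H1 : 0 < (m - c) * (s * s)) by (apply Rmult_lt_0_compat; nra).
  assert (H2 : 0 < m * s * (1 - 3 * c)) by (apply Rmult_lt_0_compat; nra).
  destruct (Rle_lt_dec m s) as [Hms|Hms].
  - assert (0 <= c * m * (s - m)) by (apply Rmult_le_pos; nra). nra.
  - assert (m <= s * s / 4) by nra.
    assert (c * (m * m) <= c * m * (s * s) / 4) by nra.
    assert (H6 : 0 < m * (1 - c / 4) - c) by nra.
    assert (0 < (m * (1 - c / 4) - c) * (s * s)) by (apply Rmult_lt_0_compat; nra).
    nra.
Qed.

Section FirstIncrements.

Variables P s : R.
Hypothesis Hs : 0 < s.
Hypothesis HP : 0 < P.

Lemma first_increments_expand :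
  sum_f_R0 (half_incr P s) 4
  = (P - s) / s + half_incr P s 1 + half_incr P s 2 + half_incr P s 3 + half_incr P s 4.
Proof. simpl sum_f_R0. unfold half_incr at 1. simpl. field. lra. Qed.

Lemma first_increments_neg_nonpos_excess : P - s <= 0 -> sum_f_R0 (half_incr P s) 4 < 0.
Proof.
  intro Hm. rewrite first_increments_expand.
  assert (H1 : half_incr P s 1 < 0).
  { rewrite half_incr_eq by lra. pose proof (coef_pos P s Hs 1 HP).
    assert (0 < coef P s 1 / (s + INR 1)) by (apply Rdiv_lt_0_compat; [lra | simpl; lra]).
    assert ((P - s - INR 1) / (INR 1 + 1) < 0) by (apply Rdiv_neg_pos; [simpl; lra | simpl; lra]).
    simpl pow. nra. }
  assert (half_incr P s 2 <= 0) by (apply half_incr_nonpos; simpl; lra).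
  assert (half_incr P s 3 <= 0) by (apply half_incr_nonpos; simpl; lra).
  assert (half_incr P s 4 <= 0) by (apply half_incr_nonpos; simpl; lra).
  assert ((P - s) / s <= 0) by (apply Rdiv_nonpos_pos; lra).
  lra.
Qed.

(* Upper bound on a nonpositive increment from a lower bound lb <= coef_k,
   using s + k <= (4 + k) s / 4 when s >= 4. *)
Lemma half_incr_le_of_coef_ge (k : nat) (lb : R) :
  4 <= s -> P - s <= INR k -> 0 <= lb -> lb <= coef P s k ->
  half_incr P s k <= (1 / 2) ^ k * (lb * 4 / ((4 + INR k) * s)) * ((P - s - INR k) / (INR k + 1)).
Proof.
  intros Hs4 Hk Hlb0 Hlb. rewrite half_incr_eq by lra. pose proof (pos_INR k).
  assert (Hdiv : lb * 4 / ((4 + INR k) * s) <= coef P s k / (s + INR k)).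
  { apply Rle_div_of_mul; [lra|].
    replace (lb * 4 / ((4 + INR k) * s) * (s + INR k))
      with (lb * (4 * (s + INR k) / ((4 + INR k) * s))) by (field; nra).
    assert (4 * (s + INR k) / ((4 + INR k) * s) <= 1) by (apply Rdiv_le_one; nra).
    nra. }
  assert ((P - s - INR k) / (INR k + 1) <= 0) by (apply Rdiv_nonpos_pos; lra).
  assert (0 <= (1 / 2) ^ k * (coef P s k / (s + INR k) - lb * 4 / ((4 + INR k) * s)))
    by (apply Rmult_le_pos; [apply pow_le|]; lra).
  nra.
Qed.

(* Lower bounds for coef_1 .. coef_4 when 0 < P - s and s > 4, so that
   P/(s+j) >= s/(s+j) > 4/(4+j). *)
Lemma first_coef_lower_bounds : 0 < P - s -> 4 < s ->
  1 <= coef P s 1 /\ 9 / 10 <= coef P s 2 /\ 4 / 5 <= coef P s 3 /\ 5 / 7 <= coef P s 4.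
Proof.
  intros Hm Hs4.
  assert (Hc1 : 1 <= coef P s 1) by (rewrite coef_one by lra; apply Rle_div_of_mul; lra).
  assert (Hq1 : 4 / 5 <= P / (s + 1)) by (apply Rle_div_of_mul; lra).
  assert (Hq2 : 2 / 3 <= P / (s + 2)) by (apply Rle_div_of_mul; lra).
  assert (Hq3 : 4 / 7 <= P / (s + 3)) by (apply Rle_div_of_mul; lra).
  assert (Hc2 : 9 / 10 <= coef P s 2).
  { rewrite coef_succ. replace (INR 1) with 1 by reflexivity.
    apply Rle_div_of_mul; [lra|]. nra. }
  assert (Hc3 : 4 / 5 <= coef P s 3).
  { rewrite coef_succ. replace (INR 2) with 2 by (simpl; ring).
    apply Rle_div_of_mul; [lra|]. nra. }
  assert (Hc4 : 5 / 7 <= coef P s 4).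
  { rewrite coef_succ. replace (INR 3) with 3 by (simpl; ring).
    apply Rle_div_of_mul; [lra|]. nra. }
  tauto.
Qed.

Lemma first_increments_neg_small_excess :
  0 < P - s < 2843 / 10000 -> 4 < s -> sum_f_R0 (half_incr P s) 4 < 0.
Proof.
  intros Hm Hs4. rewrite first_increments_expand.
  destruct (first_coef_lower_bounds ltac:(lra) Hs4) as [Hc1 [Hc2 [Hc3 Hc4]]].
  assert (B1 : half_incr P s 1 <= (P - s - 1) / (5 * s)).
  { eapply Rle_trans; [apply (half_incr_le_of_coef_ge 1 1); [lra|simpl; lra|lra|exact Hc1]|].
    right. simpl. field. lra. }
  assert (B2 : half_incr P s 2 <= (P - s - 2) / (20 * s)).
  { eapply Rle_trans; [apply (half_incr_le_of_coef_ge 2 (9 / 10)); [lra|simpl; lra|lra|exact Hc2]|].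
    right. simpl. field. lra. }
  assert (B3 : half_incr P s 3 <= (P - s - 3) / (70 * s)).
  { eapply Rle_trans; [apply (half_incr_le_of_coef_ge 3 (4 / 5)); [lra|simpl; lra|lra|exact Hc3]|].
    right. simpl. field. lra. }
  assert (B4 : half_incr P s 4 <= (P - s - 4) / (224 * s)).
  { eapply Rle_trans; [apply (half_incr_le_of_coef_ge 4 (5 / 7)); [lra|simpl; lra|lra|exact Hc4]|].
    right. simpl. field. lra. }
  assert (Htotal : (P - s) / s + (P - s - 1) / (5 * s) + (P - s - 2) / (20 * s)
                   + (P - s - 3) / (70 * s) + (P - s - 4) / (224 * s)
                   = ((P - s) + (P - s - 1) / 5 + (P - s - 2) / 20 + (P - s - 3) / 70
                      + (P - s - 4) / 224) / s) by (field; lra).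
  assert (((P - s) + (P - s - 1) / 5 + (P - s - 2) / 20 + (P - s - 3) / 70
           + (P - s - 4) / 224) / s < 0) by (apply Rdiv_neg_pos; lra).
  lra.
Qed.

(* If P - s <= 5, every increment after the fifth is nonpositive, so
   F(1/2) - 2 is at most the sum of the first five. *)
Lemma F_half_lt_two_of_first_increments (Fh : R) : P - s <= 5 ->
  is_lim_seq (half_sum P s) Fh -> sum_f_R0 (half_incr P s) 4 < 0 -> Fh < 2.
Proof.
  intros Hm HF H4.
  assert (Htail : forall n, sum_f_R0 (half_incr P s) (n + 4) <= sum_f_R0 (half_incr P s) 4).
  { induction n as [|n IH]; [simpl; lra|].
    replace (S n + 4)%nat with (S (n + 4)) by lia. rewrite tech5.
    assert (half_incr P s (S (n + 4)) <= 0).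
    { apply (half_incr_nonpos P s Hs (S (n + 4)) HP).
      pose proof (le_INR 5 (S (n + 4)) ltac:(lia)) as H5.
      replace (INR 5) with 5 in H5 by (simpl; ring). lra. }
    lra. }
  pose proof (half_incr_limit P s Hs Fh HF) as HD.
  apply (is_lim_seq_incr_n _ 4) in HD.
  pose proof (is_lim_seq_le _ (fun _ => sum_f_R0 (half_incr P s) 4) _ _ Htail HD
                (is_lim_seq_const _)) as Hle.
  change (Fh - 2 <= sum_f_R0 (half_incr P s) 4) in Hle. lra.
Qed.

End FirstIncrements.

Lemma F_half_lt_two (P s Fh : R) : 0 < s -> 0 < P -> P <= s ^ 2 / 4 ->
  is_lim_seq (half_sum P s) Fh ->
  (P - s) * s * (s + 1) <= (1 - 1 / (2 * ln 2)) * P ^ 2 -> Fh < 2.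
Proof.
  intros Hs HP Hps HF H.
  pose proof ln2_lt. pose proof ln_lt_2.
  assert (Hc0 : 0 < 1 - 1 / (2 * ln 2) < 28 / 100).
  { assert (Hinv : 1 / (2 * ln 2) * (2 * ln 2) = 1) by (field; lra).
    assert (0 < 1 / (2 * ln 2)) by (apply Rdiv_lt_0_compat; lra).
    split; nra. }
  destruct (Rle_lt_dec (P - s) 0) as [Hm|Hm].
  - apply (F_half_lt_two_of_first_increments P s Hs HP Fh); [lra|exact HF|].
    apply first_increments_neg_nonpos_excess; assumption.
  - assert (Hs4 : 4 < s) by nra.
    assert (Hsmall : P - s <= 1 - 1 / (2 * ln 2)).
    { apply (small_excess (P - s) s); try lra; replace (s + (P - s)) with P by ring; lra. }
    apply (F_half_lt_two_of_first_increments P s Hs HP Fh); [lra|exact HF|].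
    apply first_increments_neg_small_excess; lra.
Qed.

(* Part (2): under (P - s) s (s+1) >= c1 P^2 the value F(1/2) exceeds 2.
   For 0 < m = P - s <= 1 we have coef_k <= P/s, which bounds every increment
   from below by -(1/2)^k rho(k) / s with an explicit rational rho; summing
   rho with the partial fractions 1, 1/k, 1/(k+1) expresses the bound through
   the logarithmic series at 1/2. The case m > 1 reduces to m = 1 because F
   increases with P. *)
Definition rho (m s x : R) : R :=
  (x - m) / (x + 1) - (x - m) ^ 2 / (x * (x + 1) * (s + 1)).

Fixpoint rho_sum (m s : R) (n : nat) : R :=
  match n with
  | O => 0
  | S j => rho_sum m s j + (1 / 2) ^ S j * rho m s (INR (S j))
  end.

(* The limit of rho_sum m s n when sum_{k=1}^n 2^-k / k tends to L. *)
Definition rho_series (m s L : R) : R :=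
  (1 - 1 / (s + 1)) + (- (1 + m) + (1 + 2 * m) / (s + 1) + m ^ 2 / (s + 1)) * (2 * L - 1)
  - m ^ 2 / (s + 1) * L.

(* For x >= 1, rho(x) dominates (x - m)(s + m) / ((s + x)(x + 1)); the
   difference is (x-m)^2 ((s+1)x - (s+x)) / (x(x+1)(s+1)(s+x)) >= 0. *)
Lemma rho_ge (m s x : R) : 0 < s -> 0 <= m -> 1 <= x ->
  (x - m) * (s + m) / ((s + x) * (x + 1)) <= rho m s x.
Proof.
  intros Hs Hm Hx.
  assert (Hgap : rho m s x - (x - m) * (s + m) / ((s + x) * (x + 1))
                 = (x - m) * (x - m) * ((s + 1) * x - (s + x))
                   / (x * (x + 1) * (s + 1) * (s + x))) by (unfold rho; field; lra).
  assert (0 <= (x - m) * (x - m) * ((s + 1) * x - (s + x))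
               / (x * (x + 1) * (s + 1) * (s + x))).
  { assert (0 <= s * (x - 1)) by (apply Rmult_le_pos; lra).
    apply Rdiv_le_0_compat; [apply Rmult_le_pos; [apply Rle_0_sqr|lra]|].
    repeat apply Rmult_lt_0_compat; lra. }
  lra.
Qed.

Section LowerBound.

Variables P s : R.
Hypothesis Hs : 0 < s.
Hypothesis Hm : 0 < P - s <= 1.

Lemma half_incr_ge (k : nat) : (1 <= k)%nat ->
  - ((1 / 2) ^ k * rho (P - s) s (INR k)) / s <= half_incr P s k.
Proof.
  intro Hk. rewrite half_incr_eq by lra.
  assert (HkR : 1 <= INR k) by (apply (le_INR 1); lia).
  pose proof (coef_le_first P s Hs k ltac:(lra) ltac:(lra) Hk) as Hcoef.
  pose proof (coef_pos P s Hs k ltac:(lra)).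
  assert (Hpow : 0 < (1 / 2) ^ k) by (apply pow_lt; lra).
  assert (Hneg : (P - s - INR k) / (INR k + 1) <= 0) by (apply Rdiv_nonpos_pos; lra).
  assert (Hrho : - rho (P - s) s (INR k) / s
                 <= (P / s) / (s + INR k) * ((P - s - INR k) / (INR k + 1))).
  { replace ((P / s) / (s + INR k) * ((P - s - INR k) / (INR k + 1)))
      with (- ((INR k - (P - s)) * (s + (P - s)) / ((s + INR k) * (INR k + 1))) / s)
      by (field; lra).
    apply Rdiv_le_compat_r; [lra|]. apply Ropp_le_contravar, rho_ge; lra. }
  assert (Hcoef' : coef P s k / (s + INR k) <= (P / s) / (s + INR k))
    by (apply Rdiv_le_compat_r; lra).
  replace (- ((1 / 2) ^ k * rho (P - s) s (INR k)) / s)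
    with ((1 / 2) ^ k * (- rho (P - s) s (INR k) / s)) by (field; lra).
  assert (0 <= (1 / 2) ^ k * ((P / s) / (s + INR k) - coef P s k / (s + INR k)))
    by (apply Rmult_le_pos; lra).
  nra.
Qed.

Lemma half_incr_sum_ge (n : nat) :
  (P - s - rho_sum (P - s) s n) / s <= sum_f_R0 (half_incr P s) n.
Proof.
  induction n as [|n IH].
  - simpl. unfold half_incr. simpl. right. field. lra.
  - rewrite tech5. pose proof (half_incr_ge (S n) ltac:(lia)).
    change (rho_sum (P - s) s (S n))
      with (rho_sum (P - s) s n + (1 / 2) ^ S n * rho (P - s) s (INR (S n))).
    replace ((P - s - (rho_sum (P - s) s n + (1 / 2) ^ S n * rho (P - s) s (INR (S n)))) / s)
      with ((P - s - rho_sum (P - s) s n) / s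
            + - ((1 / 2) ^ S n * rho (P - s) s (INR (S n))) / s) by (field; lra).
    lra.
Qed.

End LowerBound.

(* Closed form of rho_sum via the partial fractions
   rho(x) = 1 - (1+m)/(x+1) - (1 + m^2/x - (1+m)^2/(x+1)) / (s+1). *)
Lemma rho_sum_closed (m s : R) (n : nat) : 0 < s ->
  rho_sum m s n
  = (1 - 1 / (s + 1)) * (1 - (1 / 2) ^ n)
    + (- (1 + m) + (1 + 2 * m) / (s + 1) + m ^ 2 / (s + 1)) * (2 * log_sum (S n) (1 / 2) - 1)
    - m ^ 2 / (s + 1) * log_sum n (1 / 2).
Proof.
  intro Hs. induction n as [|n IH]; [simpl; field; lra|].
  change (rho_sum m s (S n)) with (rho_sum m s n + (1 / 2) ^ S n * rho m s (INR (S n))).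
  rewrite IH.
  change (log_sum (S (S n)) (1 / 2))
    with (log_sum (S n) (1 / 2) + (1 / 2) ^ S (S n) / (INR (S n) + 1)).
  change (log_sum (S n) (1 / 2)) with (log_sum n (1 / 2) + (1 / 2) ^ S n / (INR n + 1)).
  unfold rho. rewrite S_INR. pose proof (pos_INR n).
  simpl pow. field. lra.
Qed.

(* Using sum 2^-k = 1 and sum 2^-k/(k+1) = 2L - 1. *)
Lemma rho_sum_limit (m s L : R) : 0 < s ->
  is_lim_seq (fun n => log_sum n (1 / 2)) L -> is_lim_seq (rho_sum m s) (rho_series m s L).
Proof.
  intros Hs HL.
  apply is_lim_seq_ext with (fun n =>
    (1 - 1 / (s + 1)) * (1 - (1 / 2) ^ n)
    + (- (1 + m) + (1 + 2 * m) / (s + 1) + m ^ 2 / (s + 1)) * (2 * log_sum (S n) (1 / 2) - 1)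
    - m ^ 2 / (s + 1) * log_sum n (1 / 2)).
  { intro n. symmetry. apply rho_sum_closed; exact Hs. }
  assert (Hgeom : is_lim_seq (fun n => 1 - (1 / 2) ^ n) 1).
  { assert (H : is_lim_seq (fun n => 1 - (1 / 2) ^ n) (1 - 0)).
    { apply is_lim_seq_minus'; [apply is_lim_seq_const|].
      apply is_lim_seq_geom. rewrite Rabs_pos_eq; lra. }
    rewrite Rminus_0_r in H. exact H. }
  assert (HL1 : is_lim_seq (fun n => 2 * log_sum (S n) (1 / 2) - 1) (2 * L - 1)).
  { apply is_lim_seq_minus'; [|apply is_lim_seq_const].
    apply (is_lim_seq_scal_l (fun n => log_sum (S n) (1 / 2)) 2 L).
    exact (proj1 (is_lim_seq_incr_1 (fun n => log_sum n (1 / 2)) L) HL). }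
  unfold rho_series. replace (1 - 1 / (s + 1)) with ((1 - 1 / (s + 1)) * 1) at 1 by ring.
  apply is_lim_seq_minus'; [apply is_lim_seq_plus'|].
  - exact (is_lim_seq_scal_l _ _ 1 Hgeom).
  - exact (is_lim_seq_scal_l _ _ (2 * L - 1) HL1).
  - exact (is_lim_seq_scal_l _ _ L HL).
Qed.

Lemma F_half_gt_two_of_rho_series (P s Fh L : R) : 0 < s -> 0 < P - s <= 1 ->
  is_lim_seq (half_sum P s) Fh -> is_lim_seq (fun n => log_sum n (1 / 2)) L ->
  rho_series (P - s) s L < P - s -> 2 < Fh.
Proof.
  intros Hs Hm HF HL Hrho.
  assert (Hlow : is_lim_seq (fun n => (P - s - rho_sum (P - s) s n) / s)
                            ((P - s - rho_series (P - s) s L) / s)).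
  { apply is_lim_seq_ext with (fun n => / s * (P - s - rho_sum (P - s) s n)).
    { intro n. unfold Rdiv. ring. }
    replace ((P - s - rho_series (P - s) s L) / s)
      with (/ s * (P - s - rho_series (P - s) s L)) by (unfold Rdiv; ring).
    apply (is_lim_seq_scal_l _ _ (P - s - rho_series (P - s) s L)).
    apply is_lim_seq_minus'; [apply is_lim_seq_const|].
    apply rho_sum_limit; assumption. }
  pose proof (is_lim_seq_le _ _ _ _ (half_incr_sum_ge P s Hs Hm) Hlow
                (half_incr_limit P s Hs Fh HF)) as Hle.
  simpl in Hle.
  assert (0 < (P - s - rho_series (P - s) s L) / s) by (apply Rdiv_lt_0_compat; lra).
  lra.
Qed.

(* Writing
   (m - rho_series m s L)(s + 1) = T(L), T is increasing in L and s T(l) > 0. *)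
Lemma rho_series_lt_excess (m s L l : R) : 0 < m <= 1 -> 4 < s -> 1 / 2 < l < 3 / 4 ->
  l <= L -> L <= 1 -> m * s * (s + 1) * l >= (1 - l) * (s + m) ^ 2 ->
  rho_series m s L < m.
Proof.
  intros Hm Hs Hl HlL HL1 H.
  set (T := fun x => 2 * x * (1 + m) * (s + 1) - 2 * (s + 1) + 2 + 2 * m - 2 * x
                     - 4 * m * x + m ^ 2 * (1 - x)).
  assert (E : m - rho_series m s L = T L / (s + 1))
    by (unfold rho_series, T; cbv beta; field; lra).
  assert (Hmono : T l <= T L).
  { unfold T.
    assert (0 <= (L - l) * (2 * (1 + m) * (s + 1) - 2 - 4 * m - m ^ 2))
      by (apply Rmult_le_pos; nra).
    nra. }
  assert (HTl : 0 < s * T l).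
  { assert (E2 : s * T l = 2 * (m * s * (s + 1) * l - (1 - l) * (s + m) ^ 2)
                           + s * (6 * m - 8 * m * l) + m ^ 2 * (1 - l) * (2 + s))
      by (unfold T; ring).
    assert (0 < s * (6 * m - 8 * m * l)) by (apply Rmult_lt_0_compat; nra).
    assert (0 <= m ^ 2 * (1 - l) * (2 + s))
      by (apply Rmult_le_pos; [apply Rmult_le_pos; [apply pow2_ge_0|]|]; lra).
    lra. }
  assert (0 < T l) by nra.
  assert (0 < T L / (s + 1)) by (apply Rdiv_lt_0_compat; lra).
  lra.
Qed.

Lemma rho_series_lt_one (s L : R) : 4 < s -> 2 / 3 <= L <= 1 -> rho_series 1 s L < 1.
Proof.
  intros Hs HL.
  assert (E : 1 - rho_series 1 s L = (4 * L * (s + 1) - 2 * (s + 1) + 5 - 7 * L) / (s + 1))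
    by (unfold rho_series; field; lra).
  assert (0 < (4 * L * (s + 1) - 2 * (s + 1) + 5 - 7 * L) / (s + 1))
    by (apply Rdiv_lt_0_compat; nra).
  lra.
Qed.

Lemma half_sum_limit_mono (P1 P2 s F2 : R) : 0 < s -> 0 < P1 -> P1 <= P2 ->
  is_lim_seq (half_sum P2 s) F2 -> exists F1 : R, is_lim_seq (half_sum P1 s) F1 /\ F1 <= F2.
Proof.
  intros Hs HP1 HP12 HF2.
  assert (Hgrow2 : Un_growing (half_sum P2 s)) by (apply half_sum_growing; lra).
  assert (Hub : forall n, half_sum P1 s n <= F2).
  { intro n. apply Rle_trans with (half_sum P2 s n); [apply half_sum_mono_P; lra|].
    apply growing_ineq; [exact Hgrow2|]. apply is_lim_seq_Reals, HF2. }
  destruct (growing_cv (half_sum P1 s) (half_sum_growing P1 s Hs HP1)) as [F1 HF1].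
  { exists F2. intros x [n ->]. apply Hub. }
  apply is_lim_seq_Reals in HF1.
  exists F1. split; [exact HF1|].
  exact (is_lim_seq_le _ (fun _ => F2) F1 F2 Hub HF1 (is_lim_seq_const _)).
Qed.

Lemma F_half_gt_two (P s Fh : R) : 0 < s -> 0 < P -> P <= s ^ 2 / 4 ->
  is_lim_seq (half_sum P s) Fh ->
  (P - s) * s * (s + 1) >= (1 / ln 2 - 1) * P ^ 2 -> 2 < Fh.
Proof.
  intros Hs HP Hps HF H.
  pose proof ln2_lt. pose proof ln_lt_2.
  assert (Hinv : 1 / ln 2 * ln 2 = 1) by (field; lra).
  assert (Hc1 : 0 < 1 / ln 2 - 1).
  { assert (0 < 1 / ln 2) by (apply Rdiv_lt_0_compat; lra). nra. }
  assert (Hm : 0 < P - s).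
  { apply Rnot_le_lt; intro Hn.
    assert (0 < (1 / ln 2 - 1) * P ^ 2) by (apply Rmult_lt_0_compat; [lra|apply pow_lt; lra]).
    assert (0 <= s * (s + 1)) by nra. nra. }
  assert (Hs4 : 4 < s) by nra.
  destruct log_series_half as [L [HL [HlnL HL1]]].
  destruct (Rle_lt_dec (P - s) 1) as [Hm1|Hm1].
  - apply (F_half_gt_two_of_rho_series P s Fh L); try lra; try assumption.
    apply (rho_series_lt_excess (P - s) s L (ln 2)); try lra.
    replace (s + (P - s)) with P by ring.
    replace ((1 - ln 2) * P ^ 2) with (ln 2 * ((1 / ln 2 - 1) * P ^ 2)) by (field; lra).
    assert (ln 2 * ((1 / ln 2 - 1) * P ^ 2) <= ln 2 * ((P - s) * s * (s + 1)))
      by (apply Rmult_le_compat_l; lra).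
    lra.
  - destruct (half_sum_limit_mono (s + 1) P s Fh) as [F1 [HF1 HF1le]]; try lra; [exact HF|].
    assert (2 < F1); [|lra].
    apply (F_half_gt_two_of_rho_series (s + 1) s F1 L); try lra; try assumption.
    replace (s + 1 - s) with 1 by ring. apply rho_series_lt_one; lra.
Qed.

Section Hypergeometric.

Variables c d : R.
Hypothesis Hc : 0 < c.
Hypothesis Hd : 0 < d.

Lemma hyp_partial_sums (Fx x : R) : infinite_sum (hyp_term c d (c + d) x) Fx ->
  is_lim_seq (fun n => sum_f_R0 (fun k => coef (c * d) (c + d) k * x ^ k) n) Fx.
Proof.
  intro H. apply is_lim_seq_Reals.
  intros eps Heps. destruct (H eps Heps) as [N HN]. exists N. intros n Hn.
  rewrite <- (sum_eq (hyp_term c d (c + d) x)); [exact (HN n Hn)|].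
  intros i _. apply hyp_term_coef; assumption.
Qed.

Lemma hyp_nonneg_mono (F : R -> R) (u v : R) : 0 < u <= v -> v < 1 ->
  (forall x, 0 < x < 1 -> infinite_sum (hyp_term c d (c + d) x) (F x)) ->
  0 <= F u /\ F u <= F v.
Proof.
  intros Hu Hv hF.
  pose proof (hyp_partial_sums (F u) u (hF u ltac:(lra))) as Lu.
  pose proof (hyp_partial_sums (F v) v (hF v ltac:(lra))) as Lv.
  assert (Hcoef : forall k, 0 < coef (c * d) (c + d) k) by (intro; apply coef_pos; nra).
  split.
  - assert (Hpos : forall n, 0 <= sum_f_R0 (fun k => coef (c * d) (c + d) k * u ^ k) n).
    { intro n. apply cond_pos_sum. intro k.
      apply Rmult_le_pos; [apply Rlt_le, Hcoef|apply pow_le; lra]. }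
    exact (is_lim_seq_le (fun _ => 0) _ 0 (F u) Hpos (is_lim_seq_const 0) Lu).
  - assert (Hle : forall n, sum_f_R0 (fun k => coef (c * d) (c + d) k * u ^ k) n
                            <= sum_f_R0 (fun k => coef (c * d) (c + d) k * v ^ k) n).
    { intro n. apply sum_growing. intro k.
      apply Rmult_le_compat_l; [apply Rlt_le, Hcoef|apply pow_incr; lra]. }
    exact (is_lim_seq_le _ _ (F u) (F v) Hle Lu Lv).
Qed.

Lemma g_mono (F : R -> R) (u v : R) : 0 < u <= v -> v < 1 ->
  (forall x, 0 < x < 1 -> infinite_sum (hyp_term c d (c + d) x) (F x)) ->
  u * F u <= v * F v.
Proof.
  intros Hu Hv hF. destruct (hyp_nonneg_mono F u v Hu Hv hF).
  apply Rmult_le_compat; lra.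
Qed.

End Hypergeometric.

Lemma Rpower_one_base (z : R) : Rpower 1 z = 1.
Proof. unfold Rpower. rewrite ln_1, Rmult_0_r. apply exp_0. Qed.

Lemma phiinv_pos (a b y : R) : 0 < phiinv a b y.
Proof. unfold phiinv, Rmin. destruct (Rle_dec _ _); unfold Rpower; apply exp_pos. Qed.

Lemma phiinv_le_one (a b y : R) : 0 < a -> 0 < y <= 1 -> phiinv a b y <= 1.
Proof.
  intros Ha Hy. unfold phiinv. eapply Rle_trans; [apply Rmin_l|].
  apply Rle_trans with (Rpower 1 (1 / a)); [|rewrite Rpower_one_base; lra].
  apply Rle_Rpower_l; [apply Rlt_le, Rdiv_lt_0_compat|]; lra.
Qed.

Lemma phiinv_ge_one (a b y : R) : 0 < a -> 0 < b -> 1 <= y -> 1 <= phiinv a b y.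
Proof.
  intros Ha Hb Hy. unfold phiinv.
  assert (Hge : forall z, 0 < z -> 1 <= Rpower y (1 / z)).
  { intros z Hz. apply Rle_trans with (Rpower y 0); [rewrite Rpower_O; lra|].
    apply Rle_Rpower; [lra|]. apply Rlt_le, Rdiv_lt_0_compat; lra. }
  apply Rmin_glb; apply Hge; assumption.
Qed.

Definition beta_arg (a b x : R) : R :=
  phiinv a b (x / (1 - x)) / (1 + phiinv a b (x / (1 - x))).

Lemma beta_lhs_arg (F : R -> R) (a b x : R) :
  beta_lhs F a b x = beta_arg a b x * F (beta_arg a b x).
Proof. reflexivity. Qed.

Lemma ratio_bounds (t : R) : 0 < t ->
  0 < t / (1 + t) < 1 /\ (t <= 1 -> t / (1 + t) <= 1 / 2) /\ (1 <= t -> 1 / 2 <= t / (1 + t)).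
Proof.
  intro Ht.
  assert (E1 : 1 - t / (1 + t) = 1 / (1 + t)) by (field; lra).
  assert (E2 : t / (1 + t) - 1 / 2 = (t - 1) / (2 * (1 + t))) by (field; lra).
  assert (0 < 1 / (1 + t)) by (apply Rdiv_lt_0_compat; lra).
  assert (0 < t / (1 + t)) by (apply Rdiv_lt_0_compat; lra).
  split; [lra|split; intro Ht1].
  - assert ((t - 1) / (2 * (1 + t)) <= 0) by (apply Rdiv_nonpos_pos; lra). lra.
  - assert (0 <= (t - 1) / (2 * (1 + t))) by (apply Rdiv_le_0_compat; lra). lra.
Qed.

Lemma beta_arg_bounds (a b x : R) : 0 < a -> 0 < b -> 0 < x < 1 ->
  0 < beta_arg a b x < 1 /\ (x <= 1 / 2 -> beta_arg a b x <= 1 / 2)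
  /\ (1 / 2 <= x -> 1 / 2 <= beta_arg a b x).
Proof.
  intros Ha Hb Hx. unfold beta_arg.
  destruct (ratio_bounds (phiinv a b (x / (1 - x))) (phiinv_pos a b _))
    as [Hin [Hle Hge]].
  assert (Hy : 0 < x / (1 - x)) by (apply Rdiv_lt_0_compat; lra).
  split; [exact Hin|split; intro Hx2].
  - apply Hle, phiinv_le_one; [exact Ha|split; [exact Hy|apply Rdiv_le_one; lra]].
  - apply Hge, phiinv_ge_one; [exact Ha|exact Hb|apply Rle_div_of_mul; lra].
Qed.

(* Since g is nondecreasing and g(beta_arg beta) = 1, the side of 1/2 on which
   beta lies is decided by the sign of g(1/2) - 1 = F(1/2)/2 - 1. *)
Section BetaSide.

Variables c d a b beta : R.
Variable F : R -> R.
Hypothesis Hc : 0 < c.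
Hypothesis Hd : 0 < d.
Hypothesis Ha : 0 < a.
Hypothesis Hb : 0 < b.
Hypothesis hF : forall x, 0 < x < 1 -> infinite_sum (hyp_term c d (c + d) x) (F x).
Hypothesis hbeta : 0 < beta < 1.
Hypothesis hsol : beta_lhs F a b beta = 1.

Lemma beta_gt_half : F (1 / 2) < 2 -> beta > 1 / 2.
Proof.
  intro HF. apply Rnot_le_lt. intro Hle.
  destruct (beta_arg_bounds a b beta Ha Hb hbeta) as [Hin [Hhalf _]].
  specialize (Hhalf Hle).
  pose proof (g_mono c d Hc Hd F (beta_arg a b beta) (1 / 2) ltac:(lra) ltac:(lra) hF).
  rewrite beta_lhs_arg in hsol. lra.
Qed.

Lemma beta_lt_half : 2 < F (1 / 2) -> beta < 1 / 2.
Proof.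
  intro HF. apply Rnot_le_lt. intro Hge.
  destruct (beta_arg_bounds a b beta Ha Hb hbeta) as [Hin [_ Hhalf]].
  specialize (Hhalf Hge).
  pose proof (g_mono c d Hc Hd F (1 / 2) (beta_arg a b beta) ltac:(lra) ltac:(lra) hF).
  rewrite beta_lhs_arg in hsol. lra.
Qed.

End BetaSide.

Lemma excess_ratio (c d : R) : 0 < c -> 0 < d ->
  (c * d / (c + d) - 1) / ((c * d / (c + d)) ^ 2 / (c + d + 1)) * (c * d) ^ 2
  = (c * d - (c + d)) * (c + d) * (c + d + 1).
Proof. intros Hc Hd. field. repeat split; nra. Qed.

Theorem mainTheorem6 (c d a b : R) (F : R -> R) (beta : R)
  (hc : 0 < c) (hd : 0 < d) (ha0 : 0 < a) (ha1 : a < 1) (hb : 1 < b)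
  (hF : forall x, 0 < x < 1 -> infinite_sum (hyp_term c d (c + d) x) (F x))
  (hbeta : 0 < beta < 1)
  (hsol : beta_lhs F a b beta = 1)
  (huniq : forall x, 0 < x < 1 -> beta_lhs F a b x = 1 -> x = beta) :
  let a0 := c * d / (c + d) in
  let h := a0 ^ 2 / (c + d + 1) in
  let c0 := 1 - 1 / (2 * ln 2) in
  let c1 := 1 / ln 2 - 1 in
  ((a0 - 1) / h <= c0 -> beta > 1 / 2) /\
  ((a0 - 1) / h >= c1 -> beta < 1 / 2).
Proof.
  intros a0 h c0 c1. unfold c0, c1.
  assert (Hratio : (a0 - 1) / h * (c * d) ^ 2 = (c * d - (c + d)) * (c + d) * (c + d + 1))
    by exact (excess_ratio c d hc hd).
  assert (HP : 0 < c * d) by nra.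
  assert (HP2 : 0 < (c * d) ^ 2) by (apply pow_lt; lra).
  assert (Hps : c * d <= (c + d) ^ 2 / 4) by (pose proof (pow2_ge_0 (c - d)); nra).
  assert (Hhalf : is_lim_seq (half_sum (c * d) (c + d)) (F (1 / 2)))
    by exact (hyp_partial_sums c d hc hd (F (1 / 2)) (1 / 2) (hF (1 / 2) ltac:(lra))).
  pose proof (beta_gt_half c d a b beta F hc hd ha0 ltac:(lra) hF hbeta hsol) as Hgt.
  pose proof (beta_lt_half c d a b beta F hc hd ha0 ltac:(lra) hF hbeta hsol) as Hlt.
  split; intro Hcond.
  - apply Hgt, (F_half_lt_two (c * d) (c + d)); try lra; [exact Hhalf|].
    rewrite <- Hratio. apply Rmult_le_compat_r; lra.
  - apply Hlt, (F_half_gt_two (c * d) (c + d)); try lra; [exact Hhalf|].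
    rewrite <- Hratio. apply Rle_ge, Rmult_le_compat_r; lra.
Qed.
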